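(* In the setting of the context (with assumptions (A.1)–(A.3)), suppose the PMM generates infinite sequences $\{(u_k,v_k)\}$, $\{(z_k,w_k)\}$, $\{\gamma_k\}$, $\{\rho_k\}$, and define $x_k=z_{k-1}+\lambda w_{k-1}+\lambda(Cv_k-d)$ and $y_k=x_k-\lambda(w_{k-1}-Mu_k)$. Let $d_0$ be the distance from $(z_0,w_0)$ to the set $S_e(\partial h_1,\partial h_2)$ and $\tau=\min\{\lambda,1/\lambda\}$. Then for all $k=1,2,\dots$, $$0\in\partial g(v_k)+C^*x_k,\qquad 0\in\partial f(u_k)+M^*y_k,$$ and there exists an index $1\le i\le k$ such that $$\|Mu_i+Cv_i-d\|\le\frac{2d_0}{(1-\bar\rho)\tau\sqrt k},\qquad \|x_i-y_i\|\le\frac{2d_0}{(1-\bar\rho)\tau\sqrt k}.$$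
   Context: Let $f:\mathbb{R}^{m_1}\to(-\infty,\infty]$, $g:\mathbb{R}^{m_2}\to(-\infty,\infty]$ be proper closed convex, $M:\mathbb{R}^{m_1}\to\mathbb{R}^n$, $C:\mathbb{R}^{m_2}\to\mathbb{R}^n$ linear, $d\in\mathbb{R}^n$; consider $\min\{f(u)+g(v):Mu+Cv=d\}$ with Lagrangian $L(u,v,z)=f(u)+g(v)+\langle Mu+Cv-d,z\rangle$. A saddle point is $(u^*,v^*,z^* )$ with $L(u^*,v^*,z^* )$ finite and $\min_{(u,v)}L(u,v,z^* )=L(u^*,v^*,z^* )=\max_zL(u^*,v^*,z)$. Let $h_1(z)=f^*(-M^*z)$, $h_2(z)=g^*(-C^*z)+\langle d,z\rangle$ ($^*$ on functions = Fenchel conjugate, on operators = adjoint), and $S_e(\partial h_1,\partial h_2)=\{(z,w)\in\mathbb{R}^n\times\mathbb{R}^n:-w\in\partial h_1(z),\ w\in\partial h_2(z)\}$ (a closed convex set). Standing assumptions: (A.1) $L$ has a saddle point; (A.2) $\mathrm{ri}(\mathrm{dom} f^* )\cap\mathrm{range}(M^* )\ne\emptyset$; (A.3) $\mathrm{ri}(\mathrm{dom} g^* )\cap\mathrm{range}(C^* )\ne\emptyset$. PMM: given $(z_0,w_0)\in\mathbb{R}^n\times\mathbb{R}^n$, $\lambda>0$, $\bar\rho\in[0,1)$, for $k=1,2,\dots$: (1) let $v_k$ be a minimizer of $g(v)+\langle z_{k-1}+\lambda w_{k-1},Cv-d\rangle+\frac\lambda2\|Cv-d\|^2$ and $u_k$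 a minimizer of $f(u)+\langle z_{k-1}+\lambda(Cv_k-d),Mu\rangle+\frac\lambda2\|Mu\|^2$; (2) if $\|Mu_k+Cv_k-d\|+\|Mu_k-w_{k-1}\|=0$ stop; otherwise set $\gamma_k=\dfrac{\lambda\|Cv_k-d+w_{k-1}\|^2+\lambda\langle d-Cv_k-Mu_k,w_{k-1}-Mu_k\rangle}{\|Mu_k+Cv_k-d\|^2+\lambda^2\|Mu_k-w_{k-1}\|^2}$; (3) choose $\rho_k\in[1-\bar\rho,1+\bar\rho]$ and set $z_k=z_{k-1}+\rho_k\gamma_k(Mu_k+Cv_k-d)$, $w_k=w_{k-1}-\rho_k\gamma_k\lambda(w_{k-1}-Mu_k)$. *)

(* R : realType, vectors of R^n are column vectors 'cV[R]_n,
   linear maps R^m -> R^n are matrices 'M[R]_(n,m) acting by *m, the adjoint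
   is the transpose, extended-real valued functions take values in \bar R. *)
From HB Require Import structures.
From mathcomp Require Import all_boot all_order all_algebra.
From mathcomp Require Import boolp classical_sets reals constructive_ereal ereal.
Set Implicit Arguments. Unset Strict Implicit. Unset Printing Implicit Defensive.
Import Order.TTheory GRing.Theory Num.Theory.
Local Open Scope classical_set_scope.
Local Open Scope ring_scope.

Section ConvexAnalysis.
Variable R : realType.

Definition dotv {n : nat} (x y : 'cV[R]_n) : R := \sum_(i < n) x i 0 * y i 0.
Definition normv {n : nat} (x : 'cV[R]_n) : R := Num.sqrt (dotv x x).

Definition cvg_seqv {n : nat} (xs : nat -> 'cV[R]_n) (x : 'cV[R]_n) : Prop :=
  forall eps : R, 0 < eps -> exists N : nat, forall k, (N <= k)%N -> normv (xs k - x) < eps.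

Definition proper_fun {n : nat} (f : 'cV[R]_n -> \bar R) : Prop :=
  (forall x, f x != -oo%E) /\ (exists x, (f x < +oo)%E).

(* convex (extended-valued; for proper functions this is convexity of the epigraph) *)
Definition convex_fun {n : nat} (f : 'cV[R]_n -> \bar R) : Prop :=
  forall (x y : 'cV[R]_n) (t : R), 0 < t < 1 ->
    (f (t *: x + (1 - t) *: y)%R <= t%:E * f x + (1 - t)%:E * f y)%E.

(* closed = lower semicontinuous = all sublevel sets are closed *)
Definition closed_fun {n : nat} (f : 'cV[R]_n -> \bar R) : Prop :=
  forall (a : R) (xs : nat -> 'cV[R]_n) (x : 'cV[R]_n),
    (forall k, (f (xs k) <= a%:E)%E) -> cvg_seqv xs x -> (f x <= a%:E)%E.

Definition conj_fun {n : nat} (f : 'cV[R]_n -> \bar R) (y : 'cV[R]_n) : \bar R :=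
  ereal_sup [set ((dotv x y)%:E - f x)%E | x in [set: 'cV[R]_n]].

Definition dom_fun {n : nat} (f : 'cV[R]_n -> \bar R) : set 'cV[R]_n :=
  [set x | (f x < +oo)%E].

Definition subdiff {n : nat} (f : 'cV[R]_n -> \bar R) (x : 'cV[R]_n) : set 'cV[R]_n :=
  [set s | f x \is a fin_num /\
           forall y, (f x + (dotv s (y - x)%R)%:E <= f y)%E].

Definition aff_hull {n : nat} (A : set 'cV[R]_n) : set 'cV[R]_n :=
  [set x | exists (p : nat) (P : 'I_p -> 'cV[R]_n) (c : 'I_p -> R),
     (forall i, A (P i)) /\ \sum_(i < p) c i = 1 /\ x = \sum_(i < p) c i *: P i].

Definition rel_int {n : nat} (A : set 'cV[R]_n) : set 'cV[R]_n :=
  [set x | A x /\ exists eps : R, 0 < eps /\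
     forall y, aff_hull A y -> normv (y - x) < eps -> A y].

Definition range_mx {m n : nat} (A : 'M[R]_(m, n)) : set 'cV[R]_m :=
  [set y | exists x : 'cV[R]_n, y = A *m x].

Definition lagr {m1 m2 n : nat} (f : 'cV[R]_m1 -> \bar R) (g : 'cV[R]_m2 -> \bar R)
  (M : 'M[R]_(n, m1)) (C : 'M[R]_(n, m2)) (d : 'cV[R]_n)
  (u : 'cV[R]_m1) (v : 'cV[R]_m2) (z : 'cV[R]_n) : \bar R :=
  (f u + g v + (dotv (M *m u + C *m v - d)%R z)%:E)%E.

Definition saddle_point {m1 m2 n : nat} (f : 'cV[R]_m1 -> \bar R) (g : 'cV[R]_m2 -> \bar R)
  (M : 'M[R]_(n, m1)) (C : 'M[R]_(n, m2)) (d : 'cV[R]_n)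
  (us : 'cV[R]_m1) (vs : 'cV[R]_m2) (zs : 'cV[R]_n) : Prop :=
  lagr f g M C d us vs zs \is a fin_num /\
  (forall u v, (lagr f g M C d us vs zs <= lagr f g M C d u v zs)%E) /\
  (forall z, (lagr f g M C d us vs z <= lagr f g M C d us vs zs)%E).

Definition h1 {m1 n : nat} (f : 'cV[R]_m1 -> \bar R) (M : 'M[R]_(n, m1))
  (z : 'cV[R]_n) : \bar R := conj_fun f (- (M^T *m z)).
Definition h2 {m2 n : nat} (g : 'cV[R]_m2 -> \bar R) (C : 'M[R]_(n, m2)) (d : 'cV[R]_n)
  (z : 'cV[R]_n) : \bar R := (conj_fun g (- (C^T *m z)) + (dotv d z)%:E)%E.

Definition Se {m1 m2 n : nat} (f : 'cV[R]_m1 -> \bar R) (g : 'cV[R]_m2 -> \bar R)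
  (M : 'M[R]_(n, m1)) (C : 'M[R]_(n, m2)) (d : 'cV[R]_n) : set ('cV[R]_n * 'cV[R]_n) :=
  [set zw | subdiff (h1 f M) zw.1 (- zw.2) /\ subdiff (h2 g C d) zw.1 zw.2].

Definition dist_pair {n : nat} (z0 w0 : 'cV[R]_n) (S : set ('cV[R]_n * 'cV[R]_n)) : R :=
  inf [set Num.sqrt (normv (z0 - zw.1) ^+ 2 + normv (w0 - zw.2) ^+ 2) | zw in S].

(* PMM iteration (with the stopping test never triggered: infinite sequences) *)
Definition PMM_run {m1 m2 n : nat} (f : 'cV[R]_m1 -> \bar R) (g : 'cV[R]_m2 -> \bar R)
  (M : 'M[R]_(n, m1)) (C : 'M[R]_(n, m2)) (d : 'cV[R]_n) (lam rhobar : R)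
  (u : nat -> 'cV[R]_m1) (v : nat -> 'cV[R]_m2) (z w : nat -> 'cV[R]_n)
  (gam rho : nat -> R) : Prop :=
  forall k : nat, (1 <= k)%N ->
    (forall v' : 'cV[R]_m2,
       (g (v k) + (dotv (z k.-1 + lam *: w k.-1)%R (C *m v k - d)%R)%:E
          + (lam / 2 * normv (C *m v k - d) ^+ 2)%R%:E
        <= g v' + (dotv (z k.-1 + lam *: w k.-1)%R (C *m v' - d)%R)%:E
          + (lam / 2 * normv (C *m v' - d) ^+ 2)%R%:E)%E) /\
    (forall u' : 'cV[R]_m1,
       (f (u k) + (dotv (z k.-1 + lam *: (C *m v k - d))%R (M *m u k))%:E
          + (lam / 2 * normv (M *m u k) ^+ 2)%R%:E
        <= f u' + (dotv (z k.-1 + lam *: (C *m v k - d))%R (M *m u'))%:E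
          + (lam / 2 * normv (M *m u') ^+ 2)%R%:E)%E) /\
    normv (M *m u k + C *m v k - d) + normv (M *m u k - w k.-1) != 0 /\
    gam k = (lam * normv (C *m v k - d + w k.-1) ^+ 2
             + lam * dotv (d - C *m v k - M *m u k) (w k.-1 - M *m u k))
            / (normv (M *m u k + C *m v k - d) ^+ 2
               + lam ^+ 2 * normv (M *m u k - w k.-1) ^+ 2) /\
    1 - rhobar <= rho k <= 1 + rhobar /\
    z k = z k.-1 + (rho k * gam k) *: (M *m u k + C *m v k - d) /\
    w k = w k.-1 - (rho k * gam k * lam) *: (w k.-1 - M *m u k).

End ConvexAnalysis.

From HB Require Import structures.
From mathcomp Require Import all_boot all_order all_algebra.
From mathcomp Require Import boolp classical_sets reals constructive_ereal ereal.
From mathcomp Require Import lra ring.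
Import Order.TTheory GRing.Theory Num.Theory.
Local Open Scope classical_set_scope.
Local Open Scope ring_scope.

(* The PMM is a relaxed projective splitting method for the extended solution
   set [S_e]: the optimality conditions of the two proximal subproblems give
   [-(Cv_k - d) ∈ ∂h2(x_k)] and [-Mu_k ∈ ∂h1(y_k)], so by monotonicity the
   affine function [φ(z, w) = <z - x_k, d - Cv_k - w> + <z - y_k, w - Mu_k>]
   is nonpositive on [S_e], and [(z_k, w_k)] is the relaxed projection of
   [(z_{k-1}, w_{k-1})] onto the half-space [φ <= 0].  Hence the distance to any
   point of [S_e] decreases by at least [((1 - ρ̄) τ / 2)^2] times the squared
   residual [|Mu_k + Cv_k - d|^2 + |x_k - y_k|^2], because [γ_k >= τ / 2].
   Summing these decreases and choosing the best index gives the
   [O(1 / √k)] bound.  Only the easy inclusions of the subdifferential chain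
   rules are used. *)

Lemma le0_of_forall_le_mulr {R : realFieldType} (X K : R) :
  (forall t, 0 < t < 1 -> X <= t * K) -> X <= 0.
Proof.
move=> XtK; rewrite leNgt; apply/negP => X0.
have K0 : 0 < K by have := XtK 2^-1; lra.
pose t := X / (X + K).
have tXK : t * (X + K) = X by rewrite divfK // gt_eqF // addr_gt0.
have t0 : 0 < t by rewrite divr_gt0 // addr_gt0.
have t1 : t < 1 by rewrite ltr_pdivrMr ?addr_gt0 // mul1r; lra.
by have := XtK t (introT andP (conj t0 t1)); nra.
Qed.

Lemma min_inv_mul_le {R : realFieldType} {lam a b : R} : 0 < lam -> 0 <= a -> 0 <= b ->
  Num.min lam lam^-1 * (a + lam ^+ 2 * b) <= lam * (a + b).
Proof.
move=> lam0 a0 b0; have lamV0 : 0 < lam^-1 by rewrite invr_gt0.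
case: (lerP lam 1) => lam1.
  have -> : Num.min lam lam^-1 = lam.
    by apply/min_idPl; rewrite -[lam^-1]mul1r ler_pdivlMr //; nra.
  have lam2 : lam * lam <= 1 by nra.
  by apply: ler_wpM2l; [exact: ltW | rewrite expr2; nra].
have lamV1 : lam^-1 < 1 by rewrite invf_lt1.
have -> : Num.min lam lam^-1 = lam^-1 by apply/min_idPr; lra.
have lamV : lam^-1 * lam = 1 by rewrite mulVf // gt_eqF.
rewrite mulrDr expr2 !mulrA lamV mul1r mulrDr lerD2r.
by apply: ler_wpM2r => //; lra.
Qed.

Lemma relaxation_factor_ge {R : realFieldType} {rhobar rho c gam : R} :
  0 <= rhobar < 1 -> 1 - rhobar <= rho <= 1 + rhobar -> 0 <= c <= gam ->
  ((1 - rhobar) * c) ^+ 2 <= rho * (2 - rho) * gam ^+ 2.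
Proof.
move=> /andP[rb0 rb1] /andP[rho_lo rho_hi] /andP[c0 c_gam].
have c2 : c ^+ 2 <= gam ^+ 2 by rewrite ler_sqr ?nnegrE //; lra.
have rho2 : (1 - rhobar) ^+ 2 <= rho * (2 - rho) by rewrite expr2; nra.
by rewrite exprMn; apply: ler_pM; rewrite ?sqr_ge0.
Qed.

Lemma sqr_add_scaled_gt0 {R : realFieldType} (a b lam : R) :
  0 <= a -> 0 <= b -> lam != 0 -> a + b != 0 -> 0 < a ^+ 2 + lam ^+ 2 * b ^+ 2.
Proof.
move=> a0 b0 lam0 ab0.
have a2 := sqr_ge0 a; have lb2 : 0 <= lam ^+ 2 * b ^+ 2 by rewrite mulr_ge0 ?sqr_ge0.
rewrite lt_def addr_ge0 // andbT paddr_eq0 // sqrf_eq0 mulf_eq0 !sqrf_eq0 (negbTE lam0) /=.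
by apply: contra ab0 => /andP[/eqP-> /eqP->]; rewrite addr0.
Qed.

Lemma le_div_of_sqrt_le {R : rcfType} (N D a k d0 : R) :
  0 <= N -> N ^+ 2 <= D -> 0 < a -> 0 < k ->
  Num.sqrt ((a / 2) ^+ 2 * k * D) <= d0 -> N <= 2 * d0 / (a * Num.sqrt k).
Proof.
move=> N0 ND a0 k0 le_d0.
have D0 : 0 <= D by apply: le_trans ND; exact: sqr_ge0.
have sk0 : 0 < Num.sqrt k by rewrite sqrtr_gt0.
have N_le : N <= Num.sqrt D by rewrite -(ger0_norm N0) -sqrtr_sqr ler_wsqrtr.
have sqrtE : Num.sqrt ((a / 2) ^+ 2 * k * D) = a / 2 * Num.sqrt k * Num.sqrt D.
  rewrite sqrtrM ?mulr_ge0 ?sqr_ge0 ?ltW // sqrtrM ?sqr_ge0 // sqrtr_sqr ger0_norm //.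
  by rewrite divr_ge0 ?ltW.
rewrite sqrtE in le_d0.
rewrite ler_pdivlMr ?mulr_gt0 //.
have : N * (a * Num.sqrt k) <= Num.sqrt D * (a * Num.sqrt k).
  by apply: ler_wpM2r; rewrite // mulr_ge0 ?ltW.
lra.
Qed.

Section RealSequences.
Context {R : realFieldType}.

Lemma exists_le_average (D : nat -> R) {k} : (0 < k)%N ->
  exists2 i, (1 <= i <= k)%N & k%:R * D i <= \sum_(j < k) D j.+1.
Proof.
case: k => // k _.
case: (@arg_minP _ R 'I_k.+1 ord0 xpredT (fun j => D j.+1) isT) => i _ i_min.
exists i.+1; first by rewrite ltnS ltn_ord.
have -> : k.+1%:R * D i.+1 = \sum_(j < k.+1) D i.+1 by rewrite sumr_const card_ord mulr_natl.
by apply: ler_sum => j _; exact: i_min.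
Qed.

Lemma sum_le_telescope (E D : nat -> R) :
  (forall j, E j.+1 + D j.+1 <= E j) -> forall k, \sum_(j < k) D j.+1 <= E 0%N - E k.
Proof.
move=> decr; elim => [|k IH]; first by rewrite big_ord0 subrr.
by rewrite big_ord_recr /=; have := decr k; lra.
Qed.

End RealSequences.

Section DotProduct.
Context {R : realType} {n : nat}.
Implicit Types (a : R) (x y z : 'cV[R]_n).

Lemma dotvC x y : dotv x y = dotv y x.
Proof. by apply: eq_bigr => i _; rewrite mulrC. Qed.

Lemma dotvDl x y z : dotv (x + y) z = dotv x z + dotv y z.
Proof. by rewrite /dotv -big_split; apply: eq_bigr => i _; rewrite !mxE mulrDl. Qed.

Lemma dotvDr x y z : dotv z (x + y) = dotv z x + dotv z y.
Proof. by rewrite dotvC dotvDl !(dotvC z). Qed.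

Lemma dotvZl a x y : dotv (a *: x) y = a * dotv x y.
Proof. by rewrite /dotv mulr_sumr; apply: eq_bigr => i _; rewrite !mxE mulrA. Qed.

Lemma dotvZr a x y : dotv y (a *: x) = a * dotv y x.
Proof. by rewrite dotvC dotvZl dotvC. Qed.

Lemma dotvNl x y : dotv (- x) y = - dotv x y.
Proof. by rewrite -scaleN1r dotvZl mulN1r. Qed.

Lemma dotvNr x y : dotv y (- x) = - dotv y x.
Proof. by rewrite dotvC dotvNl dotvC. Qed.

Lemma dotvv_ge0 x : 0 <= dotv x x.
Proof. by apply: sumr_ge0 => i _; rewrite -expr2 sqr_ge0. Qed.

Lemma dotvv_eq0 x : dotv x x = 0 -> x = 0.
Proof.
move=> x0; apply/matrixP => i j; rewrite (ord1 j) mxE.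
have sq_ge0 (k : 'I_n) : true -> 0 <= x k 0 * x k 0 by rewrite -expr2 sqr_ge0.
by move/eqP: (psumr_eq0P sq_ge0 x0 (i := i) isT); rewrite mulf_eq0 orbb => /eqP.
Qed.

Lemma normv_ge0 x : 0 <= normv x.
Proof. exact: sqrtr_ge0. Qed.

Lemma normv_sqr x : normv x ^+ 2 = dotv x x.
Proof. by rewrite sqr_sqrtr // dotvv_ge0. Qed.

Lemma dotv_mulmxl {m} (A : 'M[R]_(n, m)) (x : 'cV[R]_m) y :
  dotv (A *m x) y = dotv x (A^T *m y).
Proof.
rewrite /dotv; under eq_bigr do rewrite !mxE big_distrl /=.
rewrite exchange_big /=; apply: eq_bigr => j _; rewrite !mxE big_distrr /=.
by apply: eq_bigr => i _; rewrite !mxE; ring.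
Qed.

End DotProduct.

Ltac dotv_expand := rewrite ?(dotvDl, dotvDr, dotvNl, dotvNr, dotvZl, dotvZr).

Section Vectors.
Context {R : realType} {n : nat}.
Implicit Types (t : R) (x y : 'cV[R]_n).

Lemma normv_sqrDZ x y t :
  normv (x + t *: y) ^+ 2 = normv x ^+ 2 + 2 * t * dotv x y + t ^+ 2 * normv y ^+ 2.
Proof. by rewrite !normv_sqr; dotv_expand; rewrite (dotvC y x); ring. Qed.

Lemma normvN x : normv (- x) = normv x.
Proof. by rewrite /normv dotvNl dotvNr opprK. Qed.

Lemma normvZ_sqr t x : normv (t *: x) ^+ 2 = t ^+ 2 * normv x ^+ 2.
Proof. by rewrite !normv_sqr dotvZl dotvZr mulrA -expr2. Qed.

End Vectors.

Lemma dotv_mulmx_comb {R : realType} {m n} (A : 'M[R]_(n, m)) (p : 'cV[R]_n) (u u' : 'cV[R]_m) t :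
  dotv (A *m (t *: u' + (1 - t) *: u)) p = dotv (A *m u) p + t * dotv (A^T *m p) (u' - u).
Proof.
rewrite (dotvC (A^T *m p)) -dotv_mulmxl mulmxDr mulmxBr -!scalemxAr.
by dotv_expand; ring.
Qed.

Lemma sqrt_le_dist_pair {R : realType} {n} (z0 w0 : 'cV[R]_n) S (X : R) :
  (exists zw, S zw) ->
  (forall zw, S zw -> X <= normv (z0 - zw.1) ^+ 2 + normv (w0 - zw.2) ^+ 2) ->
  Num.sqrt X <= dist_pair z0 w0 S.
Proof.
move=> [zw Szw] X_le; apply: lb_le_inf.
  by exists (Num.sqrt (normv (z0 - zw.1) ^+ 2 + normv (w0 - zw.2) ^+ 2)); exists zw.
by move=> _ [zw' Szw' <-]; apply: ler_wsqrtr; exact: X_le.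
Qed.

Section Subdifferential.
Context {R : realType} {m : nat}.
Implicit Types (F : 'cV[R]_m -> \bar R) (u s : 'cV[R]_m).

(* First-order optimality condition: the last hypothesis says that [gr] is a
   gradient of [q] at [u] up to a second-order error. *)
Lemma subdiff_of_argmin F (q : 'cV[R]_m -> R) u gr :
  proper_fun F -> convex_fun F ->
  (forall u', (F u + (q u)%:E <= F u' + (q u')%:E)%E) ->
  (forall u', exists K, forall t, 0 < t < 1 ->
     q (t *: u' + (1 - t) *: u) - q u <= t * dotv gr (u' - u) + t ^+ 2 * K) ->
  subdiff F u (- gr).
Proof.
move=> [Fnoo [u0 Fu0]] Fcvx Fq_min q_diff.
have [a Fua] : exists a, F u = a%:E.
  move: (Fq_min u0) (Fnoo u) Fu0; case: (F u) => [a _ _ _| | ] //; first by exists a.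
  by case: (F u0).
split=> [|y]; rewrite Fua //.
case Fy: (F y) => [b||]; last (by have := Fnoo y; rewrite Fy); last by rewrite leey.
rewrite -EFinD lee_fin dotvNl.
have [K qK] := q_diff y.
suff: a - dotv gr (y - u) - b <= 0 by lra.
apply: (@le0_of_forall_le_mulr _ _ K) => t /andP[t0 t1].
have Fcvx_t := Fcvx y u t ltac:(by apply/andP).
have Fq_t := Fq_min (t *: y + (1 - t) *: u).
have q_t := qK t ltac:(by apply/andP).
rewrite Fy Fua -!EFinM -EFinD in Fcvx_t; rewrite Fua in Fq_t.
move: Fcvx_t Fq_t; case: (F (t *: y + (1 - t) *: u)) => [c||] //.
rewrite lee_fin -!EFinD lee_fin => Fcvx_t Fq_t.
have : t * (a - dotv gr (y - u) - b - t * K) <= 0 by rewrite expr2 in q_t; lra.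
by rewrite pmulr_rle0 //; lra.
Qed.

Lemma fenchel_young {F u s a} : F u = a%:E -> ((dotv u s - a)%:E <= conj_fun F s)%E.
Proof. by move=> Fu; apply: ereal_sup_ubound; exists u => //; rewrite Fu EFinB. Qed.

Lemma fenchel_young_eq {F u s a} :
  F u = a%:E -> subdiff F u s -> conj_fun F s = (dotv u s - a)%:E.
Proof.
move=> Fu [_ Fs]; apply/le_anti/andP; split; last exact: fenchel_young.
apply: ge_ereal_sup => _ [x _ <-].
have := Fs x; rewrite Fu; case: (F x) => [b||] //; last by rewrite /= leNye.
by rewrite -EFinD -EFinB !lee_fin (dotvC s); dotv_expand; rewrite (dotvC u s); lra.
Qed.

End Subdifferential.

Lemma subdiff_monotone {R : realType} {n} {h : 'cV[R]_n -> \bar R} {a b s t : 'cV[R]_n} :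
  subdiff h a s -> subdiff h b t -> 0 <= dotv (s - t) (a - b).
Proof.
move=> [/EFin_fin_numP[ra ha] hs] [/EFin_fin_numP[rb hb] ht].
by have := hs b; have := ht a; rewrite ha hb -!EFinD !lee_fin; dotv_expand; lra.
Qed.

Section DualSubdifferential.
Context {R : realType} {m n : nat}.
Context {F : 'cV[R]_m -> \bar R} {A : 'M[R]_(n, m)} {u : 'cV[R]_m} {z : 'cV[R]_n}.
Hypothesis Fu_Az : subdiff F u (- (A^T *m z)).

Lemma subdiff_h1 : subdiff (h1 F A) z (- (A *m u)).
Proof.
have [a Fu] := EFin_fin_numP _ Fu_Az.1.
rewrite /subdiff /h1 /= (fenchel_young_eq Fu Fu_Az); split => // z'.
apply: le_trans (fenchel_young Fu).
by rewrite -EFinD lee_fin; dotv_expand; rewrite -!dotv_mulmxl; lra.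
Qed.

Lemma subdiff_h2 {e : 'cV[R]_n} : subdiff (h2 F A e) z (e - A *m u).
Proof.
have [a Fu] := EFin_fin_numP _ Fu_Az.1.
rewrite /subdiff /h2 /= (fenchel_young_eq Fu Fu_Az); split => // z'.
apply: le_trans (leeD2r _ (fenchel_young Fu)).
by rewrite -!EFinD lee_fin; dotv_expand; rewrite -!dotv_mulmxl; lra.
Qed.

End DualSubdifferential.

Section ArgminSubdiff.
Context {R : realType} {m n : nat}.
Context {F : 'cV[R]_m -> \bar R} {A : 'M[R]_(n, m)}.
Hypotheses (Fp : proper_fun F) (Fc : convex_fun F).

Lemma subdiff_of_argmin_prox {c e : 'cV[R]_n} {lam : R} {v} :
  (forall v', (F v + (dotv c (A *m v + e))%:E + (lam / 2 * normv (A *m v + e) ^+ 2)%:E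
     <= F v' + (dotv c (A *m v' + e))%:E + (lam / 2 * normv (A *m v' + e) ^+ 2)%:E)%E) ->
  subdiff F v (- (A^T *m (c + lam *: (A *m v + e)))).
Proof.
move=> Fv_min.
pose q v := dotv c (A *m v + e) + lam / 2 * normv (A *m v + e) ^+ 2.
apply: (@subdiff_of_argmin _ _ F q) => // [v'|v'].
  by rewrite /q !EFinD !addeA; exact: Fv_min.
exists (lam / 2 * normv (A *m (v' - v)) ^+ 2) => t _; rewrite /q.
have -> : A *m (t *: v' + (1 - t) *: v) + e = (A *m v + e) + t *: (A *m (v' - v)).
  by rewrite mulmxDr mulmxBr -!scalemxAr; apply/matrixP => i j; rewrite !mxE; ring.
rewrite normv_sqrDZ dotv_mulmxl trmxK.
by dotv_expand; rewrite (dotvC c (A *m (v' - v))); lra.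
Qed.

End ArgminSubdiff.

Section SaddlePoint.
Context {R : realType} {m1 m2 n : nat}.
Context {f : 'cV[R]_m1 -> \bar R} {g : 'cV[R]_m2 -> \bar R}.
Context {M : 'M[R]_(n, m1)} {C : 'M[R]_(n, m2)} {d : 'cV[R]_n}.
Context {us : 'cV[R]_m1} {vs : 'cV[R]_m2} {zs : 'cV[R]_n}.
Hypothesis saddle : saddle_point f g M C d us vs zs.

Let fin_f : f us \is a fin_num.
Proof. by case: saddle; rewrite /lagr !fin_numD => /andP[/andP[]]. Qed.

Let fin_g : g vs \is a fin_num.
Proof. by case: saddle; rewrite /lagr !fin_numD => /andP[/andP[]]. Qed.

Lemma saddle_point_feasible : M *m us + C *m vs - d = 0.
Proof.
have [[a fa] [b gb]] := (EFin_fin_numP _ fin_f, EFin_fin_numP _ fin_g).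
apply: dotvv_eq0; apply/le_anti; rewrite dotvv_ge0 andbT.
have := saddle.2.2 (zs + (M *m us + C *m vs - d)).
rewrite /lagr fa gb -!EFinD lee_fin.
by move: (M *m us + C *m vs - d) => r; dotv_expand; lra.
Qed.

Lemma saddle_point_subdiff_f : proper_fun f -> convex_fun f -> subdiff f us (- (M^T *m zs)).
Proof.
move=> fp fc; have [b gb] := EFin_fin_numP _ fin_g.
pose q u := b + dotv (M *m u + C *m vs - d) zs.
apply: (@subdiff_of_argmin _ _ f q) => // [u'|u'].
  by have := saddle.2.1 u' vs; rewrite /lagr gb -!addeA -!EFinD.
by exists 0 => t _; rewrite /q !dotvDl dotv_mulmx_comb; lra.
Qed.

Lemma saddle_point_subdiff_g : proper_fun g -> convex_fun g -> subdiff g vs (- (C^T *m zs)).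
Proof.
move=> gp gc; have [a fa] := EFin_fin_numP _ fin_f.
pose q v := a + dotv (M *m us + C *m v - d) zs.
apply: (@subdiff_of_argmin _ _ g q) => // [v'|v'].
  by have := saddle.2.1 us v'; rewrite /lagr fa !(addeC a%:E) -!addeA -!EFinD.
by exists 0 => t _; rewrite /q !dotvDl dotv_mulmx_comb; lra.
Qed.

End SaddlePoint.

Lemma Se_of_saddle_point {R : realType} {m1 m2 n}
    (f : 'cV[R]_m1 -> \bar R) (g : 'cV[R]_m2 -> \bar R)
    (M : 'M[R]_(n, m1)) (C : 'M[R]_(n, m2)) (d : 'cV[R]_n) us vs zs :
  proper_fun f -> convex_fun f -> proper_fun g -> convex_fun g ->
  saddle_point f g M C d us vs zs -> Se f g M C d (zs, M *m us).
Proof.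
move=> fp fc gp gc saddle; split => /=.
  by apply: subdiff_h1; exact: saddle_point_subdiff_f saddle fp fc.
have -> : M *m us = d - C *m vs.
  by apply/eqP; rewrite -subr_eq0 opprB addrA (saddle_point_feasible saddle).
by apply: subdiff_h2; exact: saddle_point_subdiff_g saddle gp gc.
Qed.

Lemma Se_separation {R : realType} {m1 m2 n}
    {f : 'cV[R]_m1 -> \bar R} {g : 'cV[R]_m2 -> \bar R}
    {M : 'M[R]_(n, m1)} {C : 'M[R]_(n, m2)} {d : 'cV[R]_n} {x y a b zs ws : 'cV[R]_n} :
  subdiff (h2 g C d) x b -> subdiff (h1 f M) y a -> Se f g M C d (zs, ws) ->
  dotv (zs - x) (b - ws) + dotv (zs - y) (a + ws) <= 0.
Proof.
move=> hx hy [/= Se1 Se2].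
have := subdiff_monotone hx Se2; have := subdiff_monotone hy Se1.
rewrite opprK (dotvC (zs - x)) (dotvC (zs - y)) -(opprB x) -(opprB y) !dotvNr; lra.
Qed.

Section Fejer.
Context {R : realType} {n : nat}.
Implicit Types (z w zs ws gz gw : 'cV[R]_n).

(* [(z', w')] is the projection of [p = (z, w)], relaxed by the factor [rho],
   onto the half-space [{q | <(gz, gw), q - p> >= phi}], which contains [(zs, ws)]. *)
Lemma relaxed_projection_step {z w z' w' zs ws gz gw} {phi rho gam : R} :
  0 <= rho * gam ->
  phi <= dotv gz (zs - z) + dotv gw (ws - w) ->
  gam * (normv gz ^+ 2 + normv gw ^+ 2) = phi ->
  z' = z + (rho * gam) *: gz -> w' = w + (rho * gam) *: gw ->
  normv (z' - zs) ^+ 2 + normv (w' - ws) ^+ 2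
    + rho * (2 - rho) * gam ^+ 2 * (normv gz ^+ 2 + normv gw ^+ 2)
  <= normv (z - zs) ^+ 2 + normv (w - ws) ^+ 2.
Proof.
move=> t0 half_space gamE -> ->.
rewrite !(addrAC _ (_ *: _)) !normv_sqrDZ.
rewrite (dotvC (z - zs)) (dotvC (w - ws)) -(opprB zs) -(opprB ws) !dotvNr.
have : 0 <= rho * gam * (dotv gz (zs - z) + dotv gw (ws - w) - phi).
  by rewrite mulr_ge0 // subr_ge0.
by rewrite -gamE; lra.
Qed.

Lemma dotv_separator_affine (x y a b z w z' w' : 'cV[R]_n) :
  dotv (z' - x) (b - w') + dotv (z' - y) (a + w')
  = dotv (z - x) (b - w) + dotv (z - y) (a + w)
    + dotv (z' - z) (a + b) + dotv (x - y) (w' - w).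
Proof. by dotv_expand; ring. Qed.

End Fejer.

(* Numerator and denominator of [γ_k] in step (2), with [P = Cv_k - d],
   [U = Mu_k] and [w = w_{k-1}]. *)
Definition gamma_num {R : realType} {n} (lam : R) (P U w : 'cV[R]_n) : R :=
  lam * normv (P + w) ^+ 2 + lam * dotv (- P - U) (w - U).

Definition gamma_den {R : realType} {n} (lam : R) (P U w : 'cV[R]_n) : R :=
  normv (U + P) ^+ 2 + lam ^+ 2 * normv (U - w) ^+ 2.

Section PMMStep.
Context {R : realType} {n : nat}.
Variables (z w P U x y : 'cV[R]_n) (lam : R).
Hypotheses (lam0 : 0 < lam)
  (xE : x = z + lam *: w + lam *: P) (yE : y = x - lam *: (w - U)).

Lemma pmm_gamma_ge {gam} :
  0 < gamma_den lam P U w -> gam * gamma_den lam P U w = gamma_num lam P U w ->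
  Num.min lam lam^-1 / 2 <= gam.
Proof.
move=> den0 gamE; rewrite -(ler_pM2r den0) gamE.
have numE : gamma_num lam P U w
            = lam / 2 * (normv (P + w) ^+ 2 + normv (U + P) ^+ 2 + normv (U - w) ^+ 2).
  rewrite /gamma_num !normv_sqr; dotv_expand.
  by rewrite ?(dotvC P w) ?(dotvC U P) ?(dotvC U w); lra.
have := min_inv_mul_le lam0 (sqr_ge0 (normv (U + P))) (sqr_ge0 (normv (U - w))).
have := mulr_ge0 (ltW lam0) (sqr_ge0 (normv (P + w))).
by rewrite /gamma_den numE; lra.
Qed.

Lemma pmm_separation {zs ws} :
  dotv (zs - x) (- P - ws) + dotv (zs - y) (- U + ws) <= 0 ->
  gamma_num lam P U w <= dotv (U + P) (zs - z) + dotv (lam *: (U - w)) (ws - w).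
Proof.
have := dotv_separator_affine x y (- U) (- P) z w zs ws.
have -> : z - x = - lam *: (w + P) by rewrite xE; apply/matrixP => i j; rewrite !mxE; ring.
have -> : z - y = - lam *: (U + P) by rewrite yE xE; apply/matrixP => i j; rewrite !mxE; ring.
have -> : x - y = - lam *: (U - w) by rewrite yE; apply/matrixP => i j; rewrite !mxE; ring.
move=> ->; rewrite /gamma_num !normv_sqr (dotvC (U + P)); dotv_expand.
by rewrite ?(dotvC P w) ?(dotvC U P) ?(dotvC U w); lra.
Qed.

Lemma pmm_fejer_step zs ws (gam rho rhobar : R) :
  0 <= rhobar < 1 -> 1 - rhobar <= rho <= 1 + rhobar ->
  dotv (zs - x) (- P - ws) + dotv (zs - y) (- U + ws) <= 0 ->
  0 < gamma_den lam P U w -> gam * gamma_den lam P U w = gamma_num lam P U w ->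
  normv (z + (rho * gam) *: (U + P) - zs) ^+ 2
    + normv (w - (rho * gam * lam) *: (w - U) - ws) ^+ 2
    + ((1 - rhobar) * Num.min lam lam^-1 / 2) ^+ 2 * (normv (U + P) ^+ 2 + normv (x - y) ^+ 2)
  <= normv (z - zs) ^+ 2 + normv (w - ws) ^+ 2.
Proof.
move=> rhobar01 rho_range sep_le0 den0 gamE.
have gam_ge := pmm_gamma_ge den0 gamE.
have tau0 : 0 <= Num.min lam lam^-1 / 2.
  by rewrite divr_ge0 // le_min !ltW ?invr_gt0.
have xyE : normv (x - y) ^+ 2 = normv (lam *: (U - w)) ^+ 2.
  by rewrite yE opprB addrC subrK -normvN -scalerN opprB.
have rg0 : 0 <= rho * gam.
  by case/andP: rhobar01 rho_range => _ ? /andP[? _]; apply: mulr_ge0; lra.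
have gamE' : gam * (normv (U + P) ^+ 2 + normv (lam *: (U - w)) ^+ 2) = gamma_num lam P U w.
  by rewrite normvZ_sqr.
have wE : w - (rho * gam * lam) *: (w - U) = w + (rho * gam) *: (lam *: (U - w)).
  by apply/matrixP => i j; rewrite !mxE; ring.
have step := relaxed_projection_step rg0 (pmm_separation sep_le0) gamE' erefl wE.
have := relaxation_factor_ge rhobar01 rho_range (introT andP (conj tau0 gam_ge)).
have -> : (1 - rhobar) * Num.min lam lam^-1 / 2 = (1 - rhobar) * (Num.min lam lam^-1 / 2).
  by rewrite mulrA.
rewrite xyE => factor_ge; apply: le_trans step.
by rewrite lerD2l ler_wpM2r // addr_ge0 ?sqr_ge0.
Qed.

End PMMStep.

Definition pmm_x {R : realType} {m2 n} (C : 'M[R]_(n, m2)) (d : 'cV[R]_n) (lam : R)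
  (v : nat -> 'cV[R]_m2) (z w : nat -> 'cV[R]_n) k :=
  z k.-1 + lam *: w k.-1 + lam *: (C *m v k - d).

Definition pmm_y {R : realType} {m1 m2 n} (M : 'M[R]_(n, m1)) (C : 'M[R]_(n, m2))
  (d : 'cV[R]_n) (lam : R) (u : nat -> 'cV[R]_m1) (v : nat -> 'cV[R]_m2)
  (z w : nat -> 'cV[R]_n) k :=
  pmm_x C d lam v z w k - lam *: (w k.-1 - M *m u k).

Section PMM.
Context {R : realType} {m1 m2 n : nat}.
Context {f : 'cV[R]_m1 -> \bar R} {g : 'cV[R]_m2 -> \bar R}.
Context {M : 'M[R]_(n, m1)} {C : 'M[R]_(n, m2)} {d : 'cV[R]_n} {lam rhobar : R}.
Context {u : nat -> 'cV[R]_m1} {v : nat -> 'cV[R]_m2} {z w : nat -> 'cV[R]_n}.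
Context {gam rho : nat -> R}.
Hypotheses (fp : proper_fun f) (fc : convex_fun f) (gp : proper_fun g) (gc : convex_fun g).
Hypotheses (lam0 : 0 < lam) (rhobar01 : 0 <= rhobar < 1).
Hypothesis run : PMM_run f g M C d lam rhobar u v z w gam rho.

Local Notation x := (pmm_x C d lam v z w).
Local Notation y := (pmm_y M C d lam u v z w).
Local Notation residual k :=
  (normv (M *m u k + C *m v k - d) ^+ 2 + normv (x k - y k) ^+ 2).

Lemma pmm_subdiff_g {k} : (1 <= k)%N -> subdiff g (v k) (- (C^T *m x k)).
Proof. by move=> k1; have [v_min _] := run k k1; exact: subdiff_of_argmin_prox v_min. Qed.

Lemma pmm_subdiff_f {k} : (1 <= k)%N -> subdiff f (u k) (- (M^T *m y k)).
Proof.
move=> k1; have [_ [u_min _]] := run k k1.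
have -> : y k = z k.-1 + lam *: (C *m v k - d) + lam *: (M *m u k + 0).
  by rewrite addr0 /pmm_y /pmm_x; apply/matrixP => i j; rewrite !mxE; ring.
by apply: subdiff_of_argmin_prox => // u'; rewrite !addr0; exact: u_min.
Qed.

Lemma pmm_fejer {zs ws k} : Se f g M C d (zs, ws) -> (1 <= k)%N ->
  normv (z k - zs) ^+ 2 + normv (w k - ws) ^+ 2
    + ((1 - rhobar) * Num.min lam lam^-1 / 2) ^+ 2 * residual k
  <= normv (z k.-1 - zs) ^+ 2 + normv (w k.-1 - ws) ^+ 2.
Proof.
move=> Se_zw k1; have [_ [_ [no_stop [gamE [rho_range [zE wE]]]]]] := run k k1.
have sep := Se_separation (subdiff_h2 (pmm_subdiff_g k1))
  (subdiff_h1 (pmm_subdiff_f k1)) Se_zw.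
rewrite -[d - _]opprB in sep.
have resE : M *m u k + C *m v k - d = M *m u k + (C *m v k - d) by rewrite addrA.
rewrite resE in no_stop gamE zE.
have den0 : 0 < gamma_den lam (C *m v k - d) (M *m u k) (w k.-1).
  exact: sqr_add_scaled_gt0 (normv_ge0 _) (normv_ge0 _) (lt0r_neq0 lam0) no_stop.
have gamE' : gam k * gamma_den lam (C *m v k - d) (M *m u k) (w k.-1)
             = gamma_num lam (C *m v k - d) (M *m u k) (w k.-1).
  by rewrite gamE /gamma_den divfK ?lt0r_neq0 // /gamma_num opprB.
rewrite zE wE resE.
exact: (@pmm_fejer_step _ _ (z k.-1) (w k.-1) _ _ (x k) (y k) lam lam0 erefl erefl
  zs ws (gam k) (rho k) rhobar rhobar01 rho_range sep den0 gamE').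
Qed.

Lemma pmm_residual_sum_le {zs ws} k : Se f g M C d (zs, ws) ->
  ((1 - rhobar) * Num.min lam lam^-1 / 2) ^+ 2 * \sum_(j < k) residual j.+1
  <= normv (z 0%N - zs) ^+ 2 + normv (w 0%N - ws) ^+ 2.
Proof.
move=> Se_zw; rewrite mulr_sumr.
pose E j := normv (z j - zs) ^+ 2 + normv (w j - ws) ^+ 2.
pose D j := ((1 - rhobar) * Num.min lam lam^-1 / 2) ^+ 2 * residual j.
apply: le_trans (@sum_le_telescope _ E D (fun j => pmm_fejer Se_zw (ltn0Sn j)) k) _.
by rewrite gerBl addr_ge0 ?sqr_ge0.
Qed.

End PMM.

Theorem mainTheorem5 (R : realType) (m1 m2 n : nat)
  (f : 'cV[R]_m1 -> \bar R) (g : 'cV[R]_m2 -> \bar R)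
  (M : 'M[R]_(n, m1)) (C : 'M[R]_(n, m2)) (d : 'cV[R]_n)
  (hf : proper_fun f /\ closed_fun f /\ convex_fun f)
  (hg : proper_fun g /\ closed_fun g /\ convex_fun g)
  (A1 : exists us vs zs, saddle_point f g M C d us vs zs)
  (A2 : exists y, rel_int (dom_fun (conj_fun f)) y /\ range_mx M^T y)
  (A3 : exists y, rel_int (dom_fun (conj_fun g)) y /\ range_mx C^T y)
  (lam rhobar : R) (hlam : 0 < lam) (hrho : 0 <= rhobar < 1)
  (u : nat -> 'cV[R]_m1) (v : nat -> 'cV[R]_m2) (z w : nat -> 'cV[R]_n)
  (gam rho : nat -> R)
  (hrun : PMM_run f g M C d lam rhobar u v z w gam rho) :
  let x k := z k.-1 + lam *: w k.-1 + lam *: (C *m v k - d) in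
  let y k := x k - lam *: (w k.-1 - M *m u k) in
  let d0 := dist_pair (z 0%N) (w 0%N) (Se f g M C d) in
  let tau := Num.min lam lam^-1 in
  forall k : nat, (1 <= k)%N ->
    (exists s, subdiff g (v k) s /\ 0 = s + C^T *m x k) /\
    (exists s, subdiff f (u k) s /\ 0 = s + M^T *m y k) /\
    (exists i : nat, (1 <= i <= k)%N /\
       normv (M *m u i + C *m v i - d)
         <= 2 * d0 / ((1 - rhobar) * tau * Num.sqrt k%:R) /\
       normv (x i - y i)
         <= 2 * d0 / ((1 - rhobar) * tau * Num.sqrt k%:R)).
Proof.
move=> x y d0 tau k k1.
case: hf => fp [_ fc]; case: hg => gp [_ gc]; have [us [vs [zs saddle]]] := A1.
split.
  exists (- (C^T *m x k)); split; last by rewrite addNr.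
  exact (pmm_subdiff_g gp gc hrun k1).
split.
  exists (- (M^T *m y k)); split; last by rewrite addNr.
  exact (pmm_subdiff_f fp fc hrun k1).
pose res j := normv (M *m u j + C *m v j - d) ^+ 2 + normv (x j - y j) ^+ 2.
have [i i_range i_avg] := exists_le_average res k1.
have a0 : 0 < (1 - rhobar) * tau.
  by case/andP: hrho => _ rb1; rewrite mulr_gt0 ?subr_gt0 // lt_min hlam invr_gt0.
have d0_ge : Num.sqrt (((1 - rhobar) * tau / 2) ^+ 2 * k%:R * res i) <= d0.
  apply: sqrt_le_dist_pair => [|[zs' ws'] Se_zw].
    by exists (zs, M *m us); exact: Se_of_saddle_point saddle.
  apply: le_trans (pmm_residual_sum_le fp fc gp gc hlam hrho hrun k Se_zw).
  by rewrite -mulrA ler_wpM2l ?sqr_ge0.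
exists i; split => //.
have k0 : 0 < k%:R :> R by rewrite ltr0n.
by split; apply: le_div_of_sqrt_le d0_ge; rewrite ?normv_ge0 // /res ?lerDl ?lerDr ?sqr_ge0.
Qed.
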